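(* Let $J$ be either a closed interval or a circle, let $n\geq 4$, let $\gamma:J\to\mathbb{R}^n$ be an injective continuous map of bounded variation, and let $\varepsilon>0$. Let $P:\mathbb{R}^n\to\mathbb{R}^{n-1}$ be the projection onto the last $n-1$ coordinates. Then there exists a linear operator $T:\mathbb{R}^n\to\mathbb{R}^{n-1}$ with $\|T-P\|<\varepsilon$ such that $T\circ\gamma$ is injective.
   Context: $\|\cdot\|$ denotes the operator norm with respect to the Euclidean norms. *)

From HB Require Import structures.
From mathcomp Require Import all_boot all_order all_algebra.
From mathcomp Require Import all_classical all_reals all_analysis.
Set Implicit Arguments. Unset Strict Implicit. Unset Printing Implicit Defensive.
Import Order.TTheory GRing.Theory Num.Theory.
Import numFieldNormedType.Exports.
Local Open Scope classical_set_scope.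
Local Open Scope ring_scope.

Definition enorm {R : realType} {k : nat} (v : 'rV[R]_k) : R :=
  Num.sqrt (\sum_(i < k) v ord0 i ^+ 2).

Definition opnorm {R : realType} {p q : nat} (A : 'M[R]_(p, q)) : R :=
  sup [set enorm (x *m A) | x in [set x : 'rV[R]_p | enorm x <= 1]].

(* The projection R^(m+1) -> R^m onto the last m coordinates, as a matrix
   acting on row vectors on the right: (x *m projP)_j = x_(j+1). *)
Definition projP {R : realType} {m : nat} : 'M[R]_(m.+1, m) :=
  \matrix_(i, j) (i == lift ord0 j)%:R.

Definition bounded_var_vec {R : realType} {k : nat} (a b : R)
    (f : R -> 'rV[R]_k) : Prop :=
  exists M : R, forall s : seq R,
    sorted <=%R s -> all (fun t => (a <= t) && (t <= b)) s ->
    \sum_(i < (size s).-1) enorm (f (nth 0 s i.+1) - f (nth 0 s i)) <= M.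

From HB Require Import structures.
From mathcomp Require Import all_boot all_order all_algebra.
From mathcomp Require Import all_classical all_reals all_analysis.
From mathcomp Require Import ring lra zify.
Import Order.TTheory GRing.Theory Num.Theory.
Import numFieldNormedType.Exports.
Local Open Scope classical_set_scope.
Local Open Scope ring_scope.
Set Implicit Arguments. Unset Strict Implicit.

(* Take T = P - e_0 w with w a row vector and e_0 the first basis vector, so that
   x T = (x_1, ..., x_m) - x_0 w.  A chord v = gamma s - gamma t is killed by T
   only if v = 0, or v_0 <> 0 and w is the slope (v_1 / v_0, ..., v_m / v_0) of v.
   For theta > 0, a curve of variation L has a d-net of O(L / d) points and the
   slope is Lipschitz on the chords with |v_0| >= theta, so the slopes of these
   chords are covered by O(d^-2) boxes of side d; since m >= 3 they form a nowhere
   dense set.  Baire's theorem gives an arbitrarily small w avoiding the slopes of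
   all chords with v_0 <> 0, and injectivity of gamma takes care of v_0 = 0. *)

Section EuclideanNorm.
Variables (R : realType) (k : nat).
Implicit Types (u v : 'rV[R]_k) (a : R).

Lemma enorm_ge0 v : 0 <= enorm v.
Proof. exact: sqrtr_ge0. Qed.

Lemma enorm0 : enorm (0 : 'rV[R]_k) = 0.
Proof. by rewrite /enorm big1 ?sqrtr0 // => i _; rewrite mxE expr0n. Qed.

Lemma normr_coord_le_enorm v i : `|v ord0 i| <= enorm v.
Proof.
rewrite /enorm -(sqrtr_sqr (v ord0 i)) ler_wsqrtr //.
by rewrite (bigD1 i) //= lerDl sumr_ge0 // => j _; exact: sqr_ge0.
Qed.

Lemma enormZ a v : enorm (a *: v) = `|a| * enorm v.
Proof.
rewrite /enorm -sqrtr_sqr -sqrtrM ?sqr_ge0 // mulr_sumr.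
by congr Num.sqrt; apply: eq_bigr => j _; rewrite mxE exprMn.
Qed.

Lemma enormN v : enorm (- v) = enorm v.
Proof. by rewrite -scaleN1r enormZ normrN normr1 mul1r. Qed.

Lemma enorm_distC u v : enorm (u - v) = enorm (v - u).
Proof. by rewrite -enormN opprB. Qed.

Lemma enorm_lt_coord v (e : R) :
  0 < e -> (forall j, `|v ord0 j| < e / k.+1%:R) -> enorm v < e.
Proof.
move=> e0 hv; set e' := e / k.+1%:R.
have e'0 : 0 < e' by rewrite divr_gt0.
have -> : e = Num.sqrt (e ^+ 2) by rewrite sqrtr_sqr gtr0_norm.
rewrite /enorm ltr_sqrt ?exprn_gt0 //.
apply: (@le_lt_trans _ _ (\sum_(j < k) e' ^+ 2)).
  apply: ler_sum => j _; rewrite -real_normK ?num_real //.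
  by rewrite lerXn2r ?nnegrE // ltW.
rewrite sumr_const card_ord -mulr_natr.
have -> : e ^+ 2 = e' ^+ 2 * k.+1%:R ^+ 2.
  by rewrite /e' expr_div_n divfK // expf_neq0 // pnatr_eq0.
rewrite ltr_pM2l ?exprn_gt0 // -natrX ltr_nat; nia.
Qed.

End EuclideanNorm.

Lemma opnorm_le (R : realType) (p q : nat) (A : 'M[R]_(p, q)) (c : R) :
  (forall x, enorm x <= 1 -> enorm (x *m A) <= c) -> opnorm A <= c.
Proof.
move=> hA; apply: ge_sup; last by move=> _ [x /hA ? <-].
by exists (enorm (0 *m A)), 0; rewrite //= enorm0 ler01.
Qed.

Lemma natr_dist_lt1_eq (R : realDomainType) (p q : nat) :
  `|p%:R - q%:R : R| < 1 -> p = q.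
Proof.
wlog pq : p q / (p <= q)%N.
  move=> W h; case: (leqP p q) => [pq|/ltnW qp]; first exact: W.
  by apply/esym/W; rewrite // distrC.
rewrite distrC ger0_norm ?subr_ge0 ?ler_nat // -natrB // ltrn1 ltnS leqn0 subn_eq0.
by move=> qp; apply/eqP; rewrite eqn_leq pq.
Qed.

Lemma dist_div_le (R : realFieldType) (x y x' y' d t B : R) :
  0 < t -> 0 <= d -> 4 * d <= t -> t <= `|y| ->
  `|x - x'| <= 2 * d -> `|y - y'| <= 2 * d -> `|x'| <= B ->
  `|x / y - x' / y'| <= (2 / t + 4 * B / t ^+ 2) * d.
Proof.
move=> t0 d0 td ty hx hy hx'.
have hy' : t / 2 <= `|y'|.
  have := ler_normD (y - y') y'; rewrite subrK; lra.
have y_gt0 : 0 < `|y| by lra.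
have y'_gt0 : 0 < `|y'| by lra.
have -> : x / y - x' / y' = (x - x') / y + x' * (y' - y) / (y * y').
  by field; rewrite -!normr_gt0 y_gt0 y'_gt0.
apply: le_trans (ler_normD _ _) _.
rewrite !normrM !normfV normrM invfM.
have B0 : 0 <= B := le_trans (normr_ge0 _) hx'.
have e1 : `|x - x'| * `|y|^-1 <= 2 * d * t^-1.
  by apply: ler_pM; rewrite ?invr_ge0 // lef_pV2.
have e2 : `|x'| * `|y' - y| * (`|y|^-1 * `|y'|^-1) <= B * (2 * d) * (t^-1 * (t / 2)^-1).
  apply: ler_pM; rewrite ?mulr_ge0 ?invr_ge0 //; first by apply: ler_pM; rewrite // distrC.
  by apply: ler_pM; rewrite ?invr_ge0 // lef_pV2 // posrE; lra.
have -> : (2 / t + 4 * B / t ^+ 2) * d = 2 * d * t^-1 + B * (2 * d) * (t^-1 * (t / 2)^-1).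
  by field; rewrite gt_eqF.
exact: lerD e1 e2.
Qed.

(* Pigeonhole on the M^m points of a grid of mesh 3h: a point z is within
   3h/2 of at most one of them in every coordinate. *)
Lemma exists_grid_point_avoiding (R : realFieldType) (m M : nat) (c : 'rV[R]_m) (h : R)
    (Z : seq 'rV[R]_m) :
  0 < h -> (size Z < M ^ m)%N ->
  exists y : 'rV[R]_m,
    (forall j, 0 <= y ord0 j - c ord0 j <= 3 * h * (M.-1)%:R) /\
    (forall z, z \in Z -> exists j, h * (3 / 2) <= `|y ord0 j - z ord0 j|).
Proof.
move=> h0 sZ.
pose G (u : {ffun 'I_m -> 'I_M}) : 'rV[R]_m :=
  \row_j (c ord0 j + 3 * h * (u j : nat)%:R).
pose close u (z : 'rV[R]_m) := [forall j, `|G u ord0 j - z ord0 j| < h * (3 / 2)].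
have close_uniq u v z : close u z -> close v z -> u = v.
  move=> /forallP hu /forallP hv; apply/ffunP => j; apply/val_inj.
  apply: (@natr_dist_lt1_eq R (u j) (v j)).
  have h3 : 0 < 3 * h by rewrite mulr_gt0.
  have := hu j; have := hv j; have := ler_distD (z ord0 j) (G u ord0 j) (G v ord0 j).
  rewrite !mxE [`|z ord0 j - _|]distrC.
  have -> : c ord0 j + 3 * h * (u j : nat)%:R - (c ord0 j + 3 * h * (v j : nat)%:R) =
    3 * h * ((u j : nat)%:R - (v j : nat)%:R) by ring.
  rewrite normrM (gtr0_norm h3) => tri hv' hu'.
  rewrite -(ltr_pM2l h3); lra.
pose P := pmap (fun z => [pick u | close u z]) Z.
have [u uP] : exists u, u \notin P.
  apply/existsP; rewrite -negb_forall; apply/negP => /forallP allP.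
  have : (#|{ffun 'I_m -> 'I_M}| <= size P)%N.
    by rewrite cardE uniq_leq_size ?enum_uniq // => v _; exact: allP.
  rewrite card_ffun !card_ord; apply/negP; rewrite -ltnNge.
  by apply: leq_trans sZ; rewrite ltnS size_pmap count_size.
exists (G u); split=> [j|z zZ].
  have M_gt0 : (0 < M)%N := leq_ltn_trans (leq0n _) (ltn_ord (u j)).
  rewrite mxE addrAC subrr add0r; apply/andP; split; first by rewrite !mulr_ge0 // ltW.
  by rewrite ler_pM2l ?mulr_gt0 // ler_nat -ltnS prednK.
have : ~~ close u z.
  apply: contra uP => hz; rewrite mem_pmap; apply/mapP; exists z => //.
  case: pickP => [v hv|/(_ u)]; last by rewrite hz.
  by rewrite (close_uniq _ _ _ hv hz).
by move/forallPn => [j]; rewrite -leNgt; exists j.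
Qed.

Definition variation_le (R : realType) (k : nat) (a b L : R) (g : R -> 'rV[R]_k) :=
  forall s : seq R, sorted <=%R s -> all (fun t => (a <= t) && (t <= b)) s ->
    \sum_(i < (size s).-1) enorm (g (nth 0 s i.+1) - g (nth 0 s i)) <= L.

Section FiniteNets.
Variables (R : realType) (k : nat) (a b L : R) (g : R -> 'rV[R]_k) (D : set R).
Hypotheses (hvar : variation_le a b L g) (hD : D `<=` `[a, b]).

Lemma variation_le_ge0 : 0 <= L.
Proof. by have := @hvar [::] isT isT; rewrite big_ord0. Qed.

Lemma enorm_chord_le x y : D x -> D y -> enorm (g x - g y) <= L.
Proof.
wlog xy : x y / x <= y.
  move=> W Dx Dy; case: (leP x y) => [|/ltW] /W; first exact.
  by rewrite enorm_distC; exact.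
move=> /hD; rewrite /= in_itv /= => /andP[ax _] /hD; rewrite /= in_itv /= => /andP[_ yb].
have := @hvar [:: x; y]; rewrite /= xy ax yb (le_trans ax xy) (le_trans xy yb) big_ord1.
by rewrite enorm_distC; exact.
Qed.

Definition separated (d : R) (s : seq R) :=
  [/\ uniq s, forall x, x \in s -> D x &
      {in s &, forall x y, x != y -> d <= enorm (g x - g y)}].

Lemma separated_size_le d s : separated d s -> (size s).-1%:R * d <= L.
Proof.
move=> [us sD sep]; set s' := sort <=%R s.
have ms x : (x \in s') = (x \in s) by rewrite mem_sort.
have us' : uniq s' by rewrite sort_uniq.
have s'ab : all (fun t => (a <= t) && (t <= b)) s'.
  by apply/allP => x; rewrite ms => /sD /hD; rewrite /= in_itv.
have := hvar (sort_sorted le_total s) s'ab; rewrite size_sort; apply: le_trans.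
have -> : (size s).-1%:R * d = \sum_(i < (size s).-1) d.
  by rewrite sumr_const card_ord mulr_natl.
apply: ler_sum => i _.
have hi : (i.+1 < size s')%N by rewrite size_sort; case: (size s) i => [|n] [].
apply: sep; rewrite -?ms ?mem_nth // ?(ltnW hi) //.
by rewrite nth_uniq // ?(ltnW hi) // eqn_leq ltnn.
Qed.

(* A maximal separated family is a net; it exists since the size of separated
   families is bounded. *)
Lemma exists_separated_net d : 0 < d ->
  exists s, separated d s /\
    forall t, D t -> exists2 p, p \in s & enorm (g t - g p) < d.
Proof.
move=> d0; apply: contrapT => no_net.
have extend s : separated d s ->
    exists t, D t /\ forall p, p \in s -> d <= enorm (g t - g p).
  move=> sep_s; apply: contrapT => no_t; apply: no_net; exists s; split => // t Dt.
  apply: contrapT => far; apply: no_t; exists t; split => // p ps.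
  by rewrite leNgt; apply/negP => tp; apply: far; exists p.
have sep_of_size n : exists s, separated d s /\ size s = n.
  elim: n => [|n [s [[us sD sep] <-]]]; first by exists [::].
  have [t [Dt far]] := extend s (And3 us sD sep).
  exists (t :: s); split => //; split.
  - rewrite /= us andbT; apply/negP => /far.
    by rewrite subrr enorm0 leNgt d0.
  - by move=> x; rewrite inE => /predU1P[->|/sD].
  - move=> x y; rewrite !inE => /predU1P[->|xs] /predU1P[->|ys]; rewrite ?eqxx //.
    + by move=> _; exact: far.
    + by move=> _; rewrite enorm_distC; exact: far.
    + exact: sep.
have [s [sep sz]] := sep_of_size (Num.truncn (L / d)).+2.
have := separated_size_le sep; rewrite sz /= -ler_pdivlMr //.
by apply/negP; rewrite -ltNge truncnS_gt.
Qed.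

Lemma exists_finite_net d : 0 < d ->
  exists s, [/\ forall x, x \in s -> D x, (size s)%:R <= L / d + 1 &
    forall t, D t -> exists2 p, p \in s & enorm (g t - g p) < d].
Proof.
move=> d0; have [s [sep net]] := exists_separated_net d0.
exists s; split => //; first by case: sep.
have := separated_size_le sep; rewrite -ler_pdivlMr // => h.
apply: le_trans (lerD h (lexx 1)).
by case: (size s) => [|n] /=; rewrite ?add0r ?ler01 ?natr1.
Qed.

End FiniteNets.

Definition slope (R : fieldType) (m : nat) (v : 'rV[R]_m.+1) : 'rV[R]_m :=
  \row_j (v ord0 (lift ord0 j) / v ord0 ord0).

Lemma slope_dist_le (R : realFieldType) (m : nat) (u v : 'rV[R]_m.+1) (d t B : R) :
  0 < t -> 0 <= d -> 4 * d <= t -> t <= `|u ord0 ord0| ->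
  (forall i, `|u ord0 i - v ord0 i| <= 2 * d) -> (forall i, `|v ord0 i| <= B) ->
  forall j, `|slope u ord0 j - slope v ord0 j| <= (2 / t + 4 * B / t ^+ 2) * d.
Proof. by move=> t0 d0 dt tu huv hv j; rewrite !mxE; apply: dist_div_le. Qed.

(* Upper box-counting dimension at most 2, in a uniform form. *)
Definition quadratic_box_covers (R : realType) (m : nat) (S : set 'rV[R]_m) :=
  exists A d0 : R, [/\ 0 <= A, 0 < d0 & forall d, 0 < d -> d <= d0 ->
    exists Z : seq 'rV[R]_m, (size Z)%:R <= (A / d + 1) ^+ 2 /\
      forall x, S x -> exists2 z, z \in Z & forall j, `|x ord0 j - z ord0 j| <= d].

Definition chord_slopes (R : realType) (m : nat) (D : set R) (g : R -> 'rV[R]_m.+1)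
    (t : R) : set 'rV[R]_m :=
  [set w | exists x y, [/\ D x, D y, t <= `|(g x - g y) ord0 ord0| & w = slope (g x - g y)]].

Lemma exists_chord_slopes_level (R : realType) (m : nat) (D : set R)
    (g : R -> 'rV[R]_m.+1) (x y : R) :
  D x -> D y -> (g x - g y) ord0 ord0 != 0 ->
  exists k : nat, chord_slopes D g k.+1%:R^-1 (slope (g x - g y)).
Proof.
move=> Dx Dy v0; exists (Num.truncn `|(g x - g y) ord0 ord0|^-1), x, y; split => //.
rewrite -[leRHS]invrK lef_pV2 ?posrE ?invr_gt0 ?normr_gt0 //.
exact/ltW/truncnS_gt.
Qed.

Lemma chord_slopes_covers (R : realType) (m : nat) (a b L : R) (g : R -> 'rV[R]_m.+1)
    (D : set R) (t : R) :
  variation_le a b L g -> D `<=` `[a, b] -> 0 < t -> quadratic_box_covers (chord_slopes D g t).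
Proof.
(* The slope is K-Lipschitz on chords with |v_0| >= t, so a net of the curve at
   scale d/K yields a d-cover of the slopes. *)
move=> hvar hD t0; have L0 := variation_le_ge0 hvar.
set K := 2 / t + 4 * L / t ^+ 2.
have K0 : 0 < K.
  by apply: ltr_wpDr; [apply: divr_ge0; [rewrite mulr_ge0 | exact: sqr_ge0] | rewrite divr_gt0].
exists (K * L), (K * t / 4); split => [||d d0 dKt].
- by rewrite mulr_ge0 // ltW.
- by rewrite divr_gt0 ?mulr_gt0.
have dK0 : 0 < d / K by rewrite divr_gt0.
have [s [sD sz net]] := exists_finite_net hvar hD dK0.
exists [seq slope (g p - g q) | p <- s, q <- s]; split.
  have {}sz : (size s)%:R <= K * L / d + 1.
    by rewrite (_ : K * L / d = L / (d / K)) // invf_div mulrA [K * L]mulrC.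
  by rewrite size_allpairs natrM expr2; apply: ler_pM.
move=> _ [x [y [Dx Dy ty ->]]].
have [p ps hp] := net x Dx; have [q qs hq] := net y Dy.
exists (slope (g p - g q)); first exact: allpairs_f.
move=> j; rewrite -[leRHS](divfK (lt0r_neq0 K0)) mulrC.
apply: slope_dist_le => //; first exact: ltW.
- by rewrite mulrA ler_pdivrMr // mulrC; lra.
- move=> i; rewrite !mxE (_ : _ - _ = (g x - g p) ord0 i - (g y - g q) ord0 i); last first.
    by rewrite !mxE; ring.
  apply: le_trans (ler_normB _ _) _.
  by have := normr_coord_le_enorm (g x - g p) i; have := normr_coord_le_enorm (g y - g q) i; lra.
- move=> i; apply: le_trans (normr_coord_le_enorm _ i) _.
  by apply: (enorm_chord_le hvar hD); apply: sD.
Qed.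

Lemma exists_box_avoiding (R : realType) (m : nat) (hm : (3 <= m)%N) (S : set 'rV[R]_m) :
  quadratic_box_covers S -> forall (c : 'rV[R]_m) (r : R), 0 < r ->
  exists (y : 'rV[R]_m) (h : R), 0 < h /\
    forall x : 'rV[R]_m, (forall j, `|x ord0 j - y ord0 j| < h) ->
      (forall j, `|x ord0 j - c ord0 j| < r) /\ ~ S x.
Proof.
(* A grid of M = N+1 points per axis and mesh 3h, with h (3M+1) = r, fits in
   the box; the cover at scale h/2 has at most (C(3M+1)+1)^2 <= ((4C+1)M)^2 < M^3
   boxes, fewer than grid points. *)
move=> [A [d0 [A0 d00 cover]]] c r r0.
set C := 2 * A / r.
have C0 : 0 <= C by rewrite divr_ge0 ?mulr_ge0 // ltW.
set N := Num.truncn ((4 * C + 1) ^+ 2 + r / d0).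
have NX : (4 * C + 1) ^+ 2 + r / d0 < N.+1%:R := truncnS_gt _.
have N1 : 1 <= N.+1%:R :> R by rewrite ler1n.
have den0 : 0 < 3 * N.+1%:R + 1 :> R by lra.
set h := r / (3 * N.+1%:R + 1).
have h0 : 0 < h by rewrite divr_gt0.
have hr : h * (3 * N.+1%:R + 1) = r by rewrite divfK // gt_eqF.
have rd0 : r < N.+1%:R * d0.
  by rewrite -ltr_pdivrMr //; have := sqr_ge0 (4 * C + 1); lra.
have h2 : 0 < h / 2 by rewrite divr_gt0.
have hd0 : h / 2 <= d0 by nra.
have [Z [sZ cov]] := cover (h / 2) h2 hd0.
have sZM : (size Z < N.+1 ^ m)%N.
  rewrite -(ltr_nat R) natrX; apply: le_lt_trans sZ _.
  apply: (@lt_le_trans _ _ (N.+1%:R ^+ 3)); last by rewrite -!natrX ler_nat leq_pexp2l.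
  have -> : A / (h / 2) = C * (3 * N.+1%:R + 1).
    by rewrite /C -hr; field; rewrite !gt_eqF.
  have lin : C * (3 * N.+1%:R + 1) + 1 <= (4 * C + 1) * N.+1%:R by nra.
  have sq : (C * (3 * N.+1%:R + 1) + 1) ^+ 2 <= ((4 * C + 1) * N.+1%:R) ^+ 2.
    have pos : 0 <= C * (3 * N.+1%:R + 1) + 1 by rewrite addr_ge0 // mulr_ge0 // ltW.
    by rewrite !expr2; apply: ler_pM.
  apply: le_lt_trans sq _; rewrite exprMn [_ ^+ 3]exprS.
  by rewrite ltr_pM2r ?exprn_gt0 //; have := divr_ge0 (ltW r0) (ltW d00); lra.
have [y [yc yZ]] := exists_grid_point_avoiding c h0 sZM.
exists y, h; split => // x xy; split => [j|Sx].
  have /andP[yc0 ycN] := yc j; rewrite -natr1 in hr.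
  have := xy j; have := ler_distD (y ord0 j) (x ord0 j) (c ord0 j).
  rewrite [`|y ord0 j - _|]ger0_norm //=; lra.
have [z zZ xz] := cov x Sx; have [j hj] := yZ z zZ.
have := xy j; have := xz j; have := ler_distD (x ord0 j) (y ord0 j) (z ord0 j).
by rewrite [`|y ord0 j - x ord0 j|]distrC; lra.
Qed.

(* ['rV[R]_m] is both a normed module (for the sup norm) and a complete space,
   but these structures are not joined into a [completeNormedModType]. *)
Definition rV_complete (R : realType) (m : nat) := 'rV[R]_m.
HB.instance Definition _ (R : realType) m := NormedModule.copy (rV_complete R m) 'rV[R]_m.
HB.instance Definition _ (R : realType) m := Complete.copy (rV_complete R m) 'rV[R]_m.

Lemma dense_compl_closure (R : realType) (m : nat) (hm : (3 <= m)%N)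
    (S : set (rV_complete R m)) :
  quadratic_box_covers S -> dense (~` closure S).
Proof.
move=> covS O [x Ox] oO.
have /nbhs_ballP[r r0 sub] : nbhs x O by apply: open_nbhs_nbhs.
have [y [h [h0 Hy]]] := exists_box_avoiding hm covS x r0.
have yy j : `|y ord0 j - y ord0 j| < h by rewrite subrr normr0.
exists y; split.
  apply: sub; split => // i j; rewrite (ord1 i) /ball /= distrC.
  exact: (Hy y yy).1 j.
move=> cl; have [v [Sv yv]] := cl _ (nbhsx_ballx y h h0).
apply: (Hy v _).2 Sv => j.
by have [_ /(_ ord0 j)] := yv; rewrite /ball /= distrC.
Qed.

Lemma exists_ball_avoiding_nowhere_dense (R : realType) (U : completeNormedModType R)
    (S : (set U)^nat) :
  (forall k, dense (~` closure (S k))) ->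
  forall (x : U) (e : R), 0 < e -> exists2 w, ball x e w & forall k, ~ S k w.
Proof.
move=> dS x e e0.
have oF k : open (~` closure (S k)) /\ dense (~` closure (S k)).
  by split; [exact/closed_openC/closed_closure | exact: dS].
have ne : ball x e !=set0 by exists x; exact: ballxx.
have [w [xw Sw]] := Baire oF ne (ball_open x e).
by exists w => // k /subset_closure; exact: Sw k I.
Qed.

Lemma mul_projP (R : realType) (m : nat) (x : 'rV[R]_m.+1) (j : 'I_m) :
  (x *m projP) ord0 j = x ord0 (lift ord0 j).
Proof.
rewrite !mxE (bigD1 (lift ord0 j)) //= !mxE eqxx mulr1 big1 ?addr0 // => i ni.
by rewrite mxE (negbTE ni) mulr0.
Qed.

Lemma mul_row_delta0_mx (R : comPzRingType) (m n : nat) (x : 'rV[R]_m.+1) (w : 'rV[R]_n) :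
  x *m (delta_mx ord0 ord0 *m w) = x ord0 ord0 *: w.
Proof. by rewrite mulmxA -colE [col _ _]mx11_scalar mul_scalar_mx mxE. Qed.

Lemma opnormN_delta0_mx (R : realType) (m n : nat) (w : 'rV[R]_n) :
  opnorm (- (delta_mx ord0 ord0 *m w) : 'M[R]_(m.+1, n)) <= enorm w.
Proof.
apply: opnorm_le => x x1; rewrite mulmxN mul_row_delta0_mx enormN enormZ.
by rewrite ler_piMl ?enorm_ge0 // (le_trans (normr_coord_le_enorm x ord0)).
Qed.

Lemma mul_projP_sub_delta0_eq0 (R : realType) (m : nat) (v : 'rV[R]_m.+1) (w : 'rV[R]_m) :
  v *m (projP - delta_mx ord0 ord0 *m w) = 0 ->
  v = 0 \/ v ord0 ord0 != 0 /\ w = slope v.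
Proof.
rewrite mulmxBr mul_row_delta0_mx => /eqP; rewrite subr_eq0 => /eqP vP.
have tail j : v ord0 (lift ord0 j) = v ord0 ord0 * w ord0 j.
  by have := congr1 (fun u : 'rV_m => u ord0 j) vP; rewrite /= mul_projP mxE.
have [v0|v0] := eqVneq (v ord0 ord0) 0; [left | right].
  apply/rowP => i; rewrite mxE; case: (unliftP ord0 i) => [j ->|->] //.
  by rewrite tail v0 mul0r.
by split => //; apply/rowP => j; rewrite mxE tail mulrC mulKf.
Qed.

Unset Implicit Arguments.

Theorem lemma5p2 (R : realType) (m : nat) (hm : (3 <= m)%N)
    (eps : R) (heps : 0 < eps) (D : set R) (gamma : R -> 'rV[R]_m.+1) :
  ((exists a b : R, a < b /\ D = `[a, b]%classic /\
       {within (`[a, b]%classic : set R), continuous gamma} /\ bounded_var_vec a b gamma)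
   \/
   (D = (`[0, 1[%classic : set R) /\ continuous gamma /\ (forall t, gamma (t + 1) = gamma t)
      /\ bounded_var_vec 0 1 gamma)) ->
  set_inj D gamma ->
  exists T : 'M[R]_(m.+1, m),
    opnorm (T - projP) < eps /\ set_inj D (fun t => gamma t *m T).
Proof.
move=> hgamma inj.
have [a [b [L [hvar hD]]]] : exists a b L, variation_le a b L gamma /\ D `<=` `[a, b].
  case: hgamma => [[a [b [_ [-> [_ [L hvar]]]]]] | [-> [_ [_ [L hvar]]]]].
    by exists a, b, L; split.
  by exists 0, 1, L; split => //; apply/subset_itvP/subset_itv_co_cc.
pose S k : set (rV_complete R m) := chord_slopes D gamma k.+1%:R^-1.
have [w w_small w_notS] : exists2 w : rV_complete R m,
    ball 0 (eps / m.+1%:R) w & forall k, ~ S k w.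
  apply: exists_ball_avoiding_nowhere_dense; last by rewrite divr_gt0.
  move=> k; apply/(dense_compl_closure hm)/(chord_slopes_covers hvar hD).
  by rewrite invr_gt0.
exists (projP - delta_mx ord0 ord0 *m w); split.
  rewrite addrAC subrr add0r; apply: le_lt_trans (opnormN_delta0_mx m w) _.
  apply: enorm_lt_coord => // j.
  by have [_ /(_ ord0 j)] := w_small; rewrite /ball /= mxE sub0r normrN.
move=> s t Ds Dt /= gamma_st.
have chord_ker : (gamma s - gamma t) *m (projP - delta_mx ord0 ord0 *m w) = 0.
  by rewrite mulmxBl gamma_st subrr.
have [/eqP|[v0 wE]] := mul_projP_sub_delta0_eq0 chord_ker.
  by rewrite subr_eq0 => /eqP; exact: inj.
have [k Sk] := exists_chord_slopes_level (set_mem Ds) (set_mem Dt) v0.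
by case: (w_notS k); rewrite /S wE.
Qed.
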